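(* Let $2\le t\le b\le M-b$. Let $\mathcal{D}$ be an $\mathbb{F}_q$-linear space of $b\times(M-b)$ matrices over $\mathbb{F}_q$ with $|\mathcal{D}|=q^{(M-b)t}$, containing an $\mathbb{F}_q$-linear subspace $\mathcal{A}$ with $|\mathcal{A}|=q^{M-b}$ in which every nonzero matrix has rank $b$. For $D\in\mathcal{D}$ let $V_D=\{(\overline{x},\overline{x}D):\overline{x}\in\mathbb{F}_q^b\}\subseteq\mathbb{F}_q^M$, and let $C$ be the array code whose columns are associated with the subspaces $V_D$, $D\in\mathcal{D}$, each exactly once. Then $C$ is a $[b\times q^{(M-b)t},\,M,\,d]$ array code with $$d=q^{(M-b)(t-1)}\left(q^{M-b}-q^{M-2b}\right);$$ its symbol locality is $r_{\mathrm s}=1$, its node locality satisfies $r_{\mathrm n}\ge2$, and its symbol availability is $t_{\mathrm s}=q^{(M-b)(t-1)}-1$.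
   Context: $q$ is a prime power. (In the paper, the subspaces $V_D$ are the blocks of a resolvable subspace transversal design of strength $t$, whose parallel classes are $\{V_D: D\in D_0+\mathcal{A}\}$ for the cosets $D_0+\mathcal{A}$ of $\mathcal{A}$ in $\mathcal{D}$.) A $[b\times n,M,d]$ array code over $\mathbb{F}_q$ is an $\mathbb{F}_q$-linear space of $b\times n$ matrices of dimension $M$; weight is the number of nonzero columns and $d$ is the minimum weight of a nonzero codeword. Given $b$-dimensional subspaces $V_1,\dots,V_n$ of $\mathbb{F}_q^M$, the array code whose columns are associated with them is obtained by placing a basis of $V_j$ as columns $(j-1)b+1,\dots,jb$ (the $j$th thick column) of an $M\times bn$ matrix $G$ and taking all arrays whose column-by-column flattening lies in the row space of $G$. A recovery set for codeword column $j$ is a set $S\subseteq[n]\setminus\{j\}$ with $V_j\subseteq\sum_{k\in S}V_k$; for symbol $(i,j)$ it is a set $S\subseteq[n]\setminus\{j\}$ such that the $i$th column of the $j$th thick column of $G$ lies in $\sum_{k\in S}V_k$. Node (resp. symbol) locality is the smallest $r$ such that every column (resp. symbol) has a recovery set of size at most $r$. Symbol availability $t_{\mathrm s}$ is the largest $t$ such that every symbol has $t$ pairwise-disjoint recovery sets each of size at most $r_{\mathrm s}$. *)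

From HB Require Import structures.
From mathcomp Require Import all_boot all_order all_algebra.
Set Implicit Arguments. Unset Strict Implicit. Unset Printing Implicit Defensive.
Import GRing.Theory.
Local Open Scope ring_scope.

Section ArrayCode.
Variables (F : fieldType) (M b n : nat).
(* Thick columns: Gs j : 'M_(M, b) whose columns form a basis of V_j (column
   space of Gs j, i.e. row space of (Gs j)^T inside 'rV_M). *)
Variable Gs : 'I_n -> 'M[F]_(M, b).

Definition gen_mx : 'M[F]_(M, \sum_(j < n) b) := \mxrow_(j < n) Gs j.

Definition unflatten (v : 'rV[F]_(\sum_(j < n) b)) : 'M[F]_(b, n) :=
  \matrix_(i < b, j < n) (submxrow v j) 0 i.

Definition array_code (X : 'M[F]_(b, n)) : Prop :=
  exists2 v, (v <= gen_mx)%MS & X = unflatten v.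

(* Dimension of the array code (= rank of G, as unflatten is injective). *)
Definition code_dim : nat := \rank gen_mx.

Definition weight (X : 'M[F]_(b, n)) : nat := #|[set j : 'I_n | col j X != 0]|.

Definition min_distance (d : nat) : Prop :=
  (exists2 X, array_code X & X != 0 /\ weight X = d) /\
  (forall X, array_code X -> X != 0 -> (d <= weight X)%N).

Definition Vsp (j : 'I_n) : 'M[F]_M := <<(Gs j)^T>>%MS.
Definition Vsum (S : {set 'I_n}) : 'M[F]_M := (\sum_(k in S) Vsp k)%MS.

Definition node_recovery_set (j : 'I_n) (S : {set 'I_n}) : Prop :=
  j \notin S /\ ((Gs j)^T <= Vsum S)%MS.

(* symbol (i,j): the i-th column of the j-th thick column of G *)
Definition symbol_recovery_set (i : 'I_b) (j : 'I_n) (S : {set 'I_n}) : Prop :=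
  j \notin S /\ (row i (Gs j)^T <= Vsum S)%MS.

Definition has_node_locality (r : nat) : Prop :=
  forall j, exists S, node_recovery_set j S /\ (#|S| <= r)%N.
Definition has_symbol_locality (r : nat) : Prop :=
  forall i j, exists S, symbol_recovery_set i j S /\ (#|S| <= r)%N.

Definition node_locality (r : nat) : Prop :=
  has_node_locality r /\ forall r', has_node_locality r' -> (r <= r')%N.
Definition symbol_locality (r : nat) : Prop :=
  has_symbol_locality r /\ forall r', has_symbol_locality r' -> (r <= r')%N.

Definition has_symbol_availability (r t : nat) : Prop :=
  forall i j, exists Ss : 'I_t -> {set 'I_n},
    (forall a, symbol_recovery_set i j (Ss a) /\ (#|Ss a| <= r)%N) /\
    (forall a c, a != c -> [disjoint Ss a & Ss c]).

Definition symbol_availability (t : nat) : Prop :=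
  exists2 r, symbol_locality r &
    has_symbol_availability r t /\
    forall t', has_symbol_availability r t' -> (t' <= t)%N.
End ArrayCode.

Definition is_lin_subspace (F : finFieldType) (b m : nat)
    (S : {set 'M[F]_(b, m)}) : Prop :=
  0 \in S /\ (forall x y, x \in S -> y \in S -> x + y \in S) /\
  (forall (a : F) x, x \in S -> a *: x \in S).

(* Basis of V_D = {(x, xD) : x in F^b} placed as columns: M x b matrix with
   columns (e_i, e_i D), M = b + m. *)
Definition VD_basis (F : fieldType) (b m : nat) (D : 'M[F]_(b, m))
  : 'M[F]_(b + m, b) := (row_mx 1%:M D)^T.

Definition code_cols (F : finFieldType) (b m : nat) (DD : {set 'M[F]_(b, m)})
  (k : 'I_#|DD|) : 'M[F]_(b + m, b) := VD_basis (enum_val k).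
Arguments code_cols {F b m} DD k.

(* A message (x, z) in F^b x F^m is stored in the column of D as x + z D^T.
   Because every nonzero matrix of AA has full rank b and #|AA| = q^m, the map
   D |-> x D sends AA onto F^m for x != 0 and, dually, D |-> z D^T sends AA onto
   F^b for z != 0.  Both maps are therefore onto from DD, with kernels of sizes
   q^(m(t-1)) and q^(mt-b).  The zero columns of a codeword with z != 0 are
   empty or a coset of the second kernel, which gives the minimum distance; a
   single column k recovers symbol (i, j) exactly when D_k and D_j share row i,
   and these k form a coset of the first kernel, which gives the symbol
   locality and availability. *)

From HB Require Import structures.
From mathcomp Require Import all_boot all_order all_algebra.
From mathcomp Require Import zify.
Set Implicit Arguments. Unset Strict Implicit. Unset Printing Implicit Defensive.
Import GRing.Theory.
Local Open Scope ring_scope.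

Lemma morphD_morphB (V W : zmodType) (phi : V -> W) :
  {morph phi : x y / x + y} -> {morph phi : x y / x - y}.
Proof.
by move=> phiD x y; apply/eqP; rewrite eq_sym subr_eq -phiD subrK.
Qed.

Lemma delta_mx_neq0 (R : nzRingType) p n (i : 'I_p) (j : 'I_n) :
  delta_mx i j != 0 :> 'M[R]_(p, n).
Proof.
by apply/eqP => /matrixP/(_ i j); rewrite !mxE !eqxx => /eqP; rewrite oner_eq0.
Qed.

Section LinSubspace.
Variables (F : finFieldType) (b m : nat) (S : {set 'M[F]_(b, m)}).
Hypothesis linS : is_lin_subspace S.

Lemma lin_subspace0 : 0 \in S.
Proof. by case: linS. Qed.

Lemma lin_subspaceD x y : x \in S -> y \in S -> x + y \in S.
Proof. by case: linS => _ [addS _]; apply: addS. Qed.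

Lemma lin_subspaceB x y : x \in S -> y \in S -> x - y \in S.
Proof.
by case: linS => _ [_ linZ] xS yS; rewrite lin_subspaceD // -scaleN1r linZ.
Qed.

(* With [s] a section of [phi], [(y, E) |-> s y + E] maps [W * ker phi]
   bijectively onto [S]. *)
Lemma card_lin_subspace_ker (W : finZmodType) (phi : 'M[F]_(b, m) -> W) :
    {morph phi : x y / x + y} -> {subset [set: W] <= phi @: S} ->
  (#|W| * #|[set E in S | phi E == 0%R]| = #|S|)%N.
Proof.
move=> phiD phi_onto; have phiB := morphD_morphB phiD.
set K := [set E in S | phi E == 0].
pose s y := odflt 0 [pick E in S | phi E == y].
have sP y : s y \in S /\ phi (s y) = y.
  rewrite /s; case: pickP => [E /andP[-> /eqP ->] //|none].
  have /imsetP[E ES phiE] := phi_onto y (in_setT y).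
  by have := none E; rewrite ES -phiE eqxx.
pose g (yE : W * 'M[F]_(b, m)) := s yE.1 + yE.2.
have g_inj : {in setX [set: W] K &, injective g}.
  move=> [y1 E1] [y2 E2]; rewrite !inE /= => /andP[_ /eqP E10] /andP[_ /eqP E20].
  rewrite /g /= => eq12; have y12 : y1 = y2.
    have := congr1 phi eq12; rewrite !phiD E10 E20 !addr0.
    by rewrite (proj2 (sP y1)) (proj2 (sP y2)).
  by move: eq12; rewrite y12 => /addrI ->.
have g_im : g @: setX [set: W] K = S.
  apply/setP => E; apply/imsetP/idP => [[[y E']]|ES].
    by rewrite !inE /= => /andP[E'S _] ->; rewrite lin_subspaceD //; case: (sP y).
  exists (phi E, E - s (phi E)); last by rewrite /g /= addrC subrK.
  have [sS sphi] := sP (phi E).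
  by rewrite !inE /= lin_subspaceB //= phiB sphi subrr.
by rewrite -g_im card_in_imset // cardsX cardsT.
Qed.

End LinSubspace.

Lemma exists_orthogonal_row (F : finFieldType) p (S : {set 'rV[F]_p}) v :
  is_lin_subspace S -> v \notin S ->
  exists2 y : 'rV[F]_p, y != 0 & forall s, s \in S -> y *m s^T = 0.
Proof.
move=> linS vS.
pose A := \matrix_(i < #|S|) (enum_val i : 'rV[F]_p).
have subAS w : (w <= A)%MS -> w \in S.
  case/submxP=> c ->; rewrite mulmx_sum_row.
  apply: (big_ind (fun x => x \in S)) => [|x y|i _]; first exact: lin_subspace0.
    exact: lin_subspaceD.
  by case: linS => _ [_ linZ]; rewrite linZ // rowK enum_valP.
have A_nfull : ~~ row_full A.
  by apply: contraNN vS => A_full; apply: subAS; apply: submx_full.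
have /rowV0Pn[y /sub_kermxP yA y0] : kermx A^T != 0.
  rewrite -mxrank_eq0 mxrank_ker mxrank_tr subn_eq0 -ltnNge.
  by rewrite ltn_neqAle A_nfull rank_leq_col.
exists y => // s sS.
have -> : s = row (enum_rank_in sS s) A by rewrite rowK enum_rankK_in.
by rewrite rowE trmx_mul mulmxA yA mul0mx.
Qed.

Section FullRankSpace.
Variables (F : finFieldType) (b m : nat) (AA : {set 'M[F]_(b, m)}).
Hypotheses (linA : is_lin_subspace AA) (cardA : #|AA| = (#|F| ^ m)%N).
Hypothesis rankA : forall X, X \in AA -> X != 0 -> \rank X = b.

Lemma imset_mulmx_full_rank (x : 'rV[F]_b) :
  x != 0 -> [set x *m D | D in AA] = [set: 'rV_m].
Proof.
move=> x0; have mulx_inj : {in AA &, injective (fun D => x *m D)}.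
  move=> D1 D2 D1A D2A /eqP; rewrite -subr_eq0 -mulmxBr => /eqP xD12.
  apply/eqP; rewrite -subr_eq0; apply: contraNT x0 => D12_neq0.
  have D12_free : row_free (D1 - D2) by rewrite /row_free rankA ?lin_subspaceB.
  by rewrite -(mulmx_free_eq0 x D12_free) xD12.
apply/eqP; rewrite eqEcard subsetT cardsT card_mx mul1n card_in_imset //.
by rewrite cardA; apply: leqnn.
Qed.

(* If [z D^T] missed a vector, some [y != 0] would satisfy [y D z^T = 0] for
   every [D], but [y D] ranges over all of ['rV_m]. *)
Lemma imset_mulmx_tr_full_rank (z : 'rV[F]_m) :
  z != 0 -> [set z *m D^T | D in AA] = [set: 'rV_b].
Proof.
move=> z0; apply/eqP; rewrite eqEsubset subsetT /=; apply/subsetP => v _.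
apply/negPn/negP => vS.
have linS : is_lin_subspace [set z *m D^T | D in AA].
  split; first by apply/imsetP; exists 0; rewrite ?lin_subspace0 ?trmx0 ?mulmx0.
  split=> [_ _ /imsetP[D1 D1A ->] /imsetP[D2 D2A ->]|a _ /imsetP[D DA ->]];
    apply/imsetP.
    by exists (D1 + D2); rewrite ?lin_subspaceD // linearD mulmxDr.
  by exists (a *: D); [case: linA => _ [_ ->]|rewrite linearZ scalemxAr].
have [y y0 yS] := exists_orthogonal_row linS vS.
have [k zk] := rV0Pn _ z0.
have /imsetP[D DA yD] : delta_mx 0 k \in [set y *m D | D in AA].
  by rewrite imset_mulmx_full_rank ?in_setT.
have /matrixP/(_ 0 0) := yS _ (imset_f _ DA).
rewrite trmx_mul trmxK mulmxA -yD -rowE !mxE.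
by move/eqP; rewrite (negbTE zk).
Qed.

End FullRankSpace.

Section SubspaceCode.
Variables (F : finFieldType) (b m : nat) (DD : {set 'M[F]_(b, m)}).
Hypothesis linD : is_lin_subspace DD.

Local Notation G := (code_cols DD).
Local Notation D_ j := (enum_val j : 'M[F]_(b, m)).

Lemma code_colsT j : (G j)^T = row_mx 1%:M (D_ j).
Proof. by rewrite /code_cols /VD_basis trmxK. Qed.

Lemma submxrow_code (u : 'rV[F]_(b + m)) j :
  submxrow (u *m gen_mx G) j = lsubmx u + rsubmx u *m (D_ j)^T.
Proof.
rewrite /gen_mx mul_mxrow mxrowK /code_cols /VD_basis -[u]hsubmxK.
by rewrite tr_row_mx trmx1 mul_row_col mulmx1 row_mxKl row_mxKr.
Qed.

Definition zero_cols (u : 'rV[F]_(b + m)) :=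
  [set j : 'I_#|DD| | lsubmx u + rsubmx u *m (D_ j)^T == 0].

Lemma weight_code u :
  weight (unflatten (u *m gen_mx G)) = (#|DD| - #|zero_cols u|)%N.
Proof.
rewrite /weight.
have -> : [set j | col j (unflatten (u *m gen_mx G)) != 0] = ~: zero_cols u.
  apply/setP => j; rewrite !inE -submxrow_code.
  by rewrite (_ : col j _ = (submxrow (u *m gen_mx G) j)^T) ?trmx_eq0 //;
    apply/matrixP => i k; rewrite !mxE (ord1 k).
by rewrite cardsCs setCK card_ord.
Qed.

Lemma weight_eq0 n (X : 'M[F]_(b, n)) : (weight X == 0%N) = (X == 0).
Proof.
rewrite /weight cards_eq0; apply/eqP/eqP => [X0 | ->].
  apply/matrixP => i j; have /setP/(_ j) := X0.
  by rewrite !inE => /negbFE/eqP/matrixP/(_ i 0); rewrite !mxE.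
by apply/setP => j; rewrite !inE col0 eqxx.
Qed.

Definition fibre (W : eqType) (phi : 'M[F]_(b, m) -> W) (j : 'I_#|DD|) :=
  [set k : 'I_#|DD| | phi (D_ k) == phi (D_ j)].

Lemma card_fibre (W : zmodType) (phi : 'M[F]_(b, m) -> W) j :
  {morph phi : x y / x + y} -> #|fibre phi j| = #|[set E in DD | phi E == 0]|.
Proof.
move=> phiD; have phiB := morphD_morphB phiD.
rewrite -(@card_in_imset _ _ (fun k => D_ k - D_ j)); last first.
  by move=> k l _ _ /addIr/enum_val_inj.
apply: eq_card => E; rewrite inE; apply/imsetP/andP => [[k]|[ES /eqP phiE]].
  by rewrite inE => /eqP kj ->; rewrite lin_subspaceB ?enum_valP // phiB kj subrr.
have jES : D_ j + E \in DD by rewrite lin_subspaceD ?enum_valP.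
exists (enum_rank_in jES (D_ j + E)); last by rewrite enum_rankK_in // addrC addKr.
by rewrite inE enum_rankK_in // phiD phiE addr0.
Qed.

Lemma card_zero_cols u j0 : j0 \in zero_cols u ->
  #|zero_cols u| = #|[set E in DD | rsubmx u *m E^T == 0]|.
Proof.
rewrite inE addrC addr_eq0 => /eqP uj0.
have -> : zero_cols u = fibre (fun E => rsubmx u *m E^T) j0.
  by apply/setP => j; rewrite !inE addrC addr_eq0 uj0.
by apply: card_fibre => x y; rewrite linearD mulmxDr.
Qed.

Lemma code_dim_code :
    (forall z : 'rV[F]_m, z != 0 -> exists2 D, D \in DD & z *m D^T != 0) ->
  code_dim G = (b + m)%N.
Proof.
move=> separating; apply/eqP; apply: inj_row_free => u u0.
have col0 (D : 'M_(b, m)) : D \in DD -> lsubmx u + rsubmx u *m D^T = 0.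
  by move=> DD_D; rewrite -(enum_rankK_in DD_D DD_D) -submxrow_code u0 submxrow0.
have x0 : lsubmx u = 0.
  by have := col0 0 (lin_subspace0 linD); rewrite trmx0 mulmx0 addr0.
have z0 : rsubmx u = 0.
  apply/eqP; apply: contraT => /separating[D DD_D].
  by rewrite -[rsubmx u *m _]add0r -{1}x0 col0 ?eqxx.
by rewrite -[u]hsubmxK x0 z0 row_mx0.
Qed.

Lemma min_distance_code k :
    (0 < m)%N -> (k < #|DD|)%N ->
    (forall z : 'rV[F]_m, z != 0 -> #|[set E in DD | z *m E^T == 0]| = k) ->
  min_distance G (#|DD| - k).
Proof.
move=> m_gt0 k_lt card_ker; have DD0 := lin_subspace0 linD.
split=> [|X [_ /submxP[u ->] ->] X_neq0].
  pose u : 'rV[F]_(b + m) := row_mx 0 (delta_mx 0 (Ordinal m_gt0)).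
  have zero_col0 : enum_rank_in DD0 0 \in zero_cols u.
    by rewrite inE enum_rankK_in // row_mxKl trmx0 mulmx0 addr0.
  have wt_u : weight (unflatten (u *m gen_mx G)) = (#|DD| - k)%N.
    rewrite weight_code (card_zero_cols zero_col0) row_mxKr.
    by rewrite card_ker ?delta_mx_neq0.
  exists (unflatten (u *m gen_mx G)).
    by exists (u *m gen_mx G); rewrite ?submxMl.
  by rewrite -weight_eq0 wt_u subn_eq0 -ltnNge.
rewrite weight_code leq_sub2l //.
have [Z0|[j0 zero_j0]] := set_0Vmem (zero_cols u); first by rewrite Z0 cards0.
rewrite (card_zero_cols zero_j0) card_ker //; apply: contraNneq X_neq0 => z0.
suff u0 : u = 0 by rewrite u0 mul0mx; apply/eqP/matrixP => i j; rewrite !mxE.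
move: zero_j0; rewrite inE z0 mul0mx addr0 => /eqP x0.
by rewrite -[u]hsubmxK x0 z0 row_mx0.
Qed.

Lemma Vsum_set1 k : Vsum G [set k] = <<row_mx 1%:M (D_ k)>>%MS.
Proof. by rewrite /Vsum big_set1 /Vsp code_colsT. Qed.

Lemma row_code_colsT_neq0 i j : row i (G j)^T != 0.
Proof.
by rewrite code_colsT row_row_mx row_mx_eq0 row1 (negbTE (delta_mx_neq0 _ _ _)).
Qed.

Lemma node_recovery_set_gt1 j S :
  (0 < b)%N -> node_recovery_set G j S -> (1 < #|S|)%N.
Proof.
move=> b_gt0 [jS sub_jS]; rewrite ltnNge leq_eqVlt ltnS leqn0 cards_eq0.
apply/negP => /orP[/cards1P[k Sk]|/eqP S0].
  move: sub_jS; rewrite Sk Vsum_set1 genmxE code_colsT.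
  case/submxP=> w; rewrite mul_mx_row mulmx1 => /eq_row_mx[<-].
  by rewrite mul1mx => /enum_val_inj jk; move: jS; rewrite Sk jk set11.
have := row_code_colsT_neq0 (Ordinal b_gt0) j.
by move: sub_jS; rewrite S0 /Vsum big_set0 submx0 => /eqP->; rewrite row0 eqxx.
Qed.

Definition symbol_peers i j := fibre (row i) j :\ j.

Lemma symbol_recovery_set1 i j k :
  symbol_recovery_set G i j [set k] <-> k \in symbol_peers i j.
Proof.
rewrite /symbol_recovery_set in_set1 Vsum_set1 genmxE code_colsT row_row_mx.
rewrite !inE eq_sym; split=> [[-> /submxP[w]] | /andP[-> /eqP rowk]].
  by rewrite mul_mx_row mulmx1 => /eq_row_mx[<- ->]; rewrite -row_mul mul1mx eqxx.
by split=> //; rewrite -rowk -row_row_mx row_sub.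
Qed.

Lemma symbol_recovery_set_le1 i j S :
    symbol_recovery_set G i j S -> (#|S| <= 1)%N ->
  exists2 k, k \in symbol_peers i j & S = [set k].
Proof.
rewrite leq_eqVlt ltnS leqn0 cards_eq0 => rec_S /orP[/cards1P[k Sk]|/eqP S0].
  by exists k => //; apply/symbol_recovery_set1; rewrite -Sk.
case: rec_S => _; rewrite S0 /Vsum big_set0 submx0.
by rewrite (negbTE (row_code_colsT_neq0 i j)).
Qed.

Lemma has_symbol_availability1P t :
  has_symbol_availability G 1 t <-> forall i j, (t <= #|symbol_peers i j|)%N.
Proof.
split=> [avail i j | peers_ge i j].
  have [Ss [rec_Ss disj_Ss]] := avail i j.
  have peer a : {k | k \in symbol_peers i j & Ss a = [set k]}.
    by apply/sig2_eqW; case: (rec_Ss a) => rec_a /(symbol_recovery_set_le1 rec_a).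
  pose f a := s2val (peer a).
  have f_inj : injective f.
    move=> a c fac; apply/eqP; apply: contraTT isT => ac.
    have := disj_Ss a c ac; rewrite (s2valP' (peer a)) (s2valP' (peer c)).
    by rewrite disjoints1 inE -/(f a) -/(f c) fac eqxx.
  rewrite -[t]card_ord -(card_imset _ f_inj); apply/subset_leq_card/subsetP.
  by move=> _ /imsetP[a _ ->]; exact: s2valP (peer a).
pose k (a : 'I_t) := nth j (enum (symbol_peers i j)) a.
have k_peer a : k a \in symbol_peers i j.
  by rewrite -mem_enum mem_nth // -cardE (leq_trans (ltn_ord a)).
exists (fun a => [set k a]); split=> [a | a c ac].
  by split; [apply/symbol_recovery_set1 | rewrite cards1].
rewrite disjoints1 in_set1 nth_uniq ?enum_uniq // -cardE.
- exact: leq_trans (ltn_ord a) (peers_ge i j).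
- exact: leq_trans (ltn_ord c) (peers_ge i j).
Qed.

Lemma card_symbol_peers i j :
  #|symbol_peers i j| = (#|[set E in DD | row i E == 0%R]| - 1)%N.
Proof.
rewrite -(@card_fibre _ (row i) j); last by move=> x y; rewrite linearD.
by rewrite [in RHS](cardsD1 j) inE eqxx add1n subn1.
Qed.

Let j0 : 'I_#|DD| := enum_rank_in (lin_subspace0 linD) 0.

Lemma node_locality_ge2 r : (0 < b)%N -> has_node_locality G r -> (2 <= r)%N.
Proof.
move=> b_gt0 /(_ j0) [S [rec_S S_le]].
exact: leq_trans (node_recovery_set_gt1 b_gt0 rec_S) S_le.
Qed.

Lemma symbol_locality1 :
  (0 < b)%N -> (forall i j, 0 < #|symbol_peers i j|)%N -> symbol_locality G 1.
Proof.
move=> b_gt0 peers_gt0.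
split=> [i j | r /(_ (Ordinal b_gt0) j0) [S [rec_S S_le]]].
  have [Ss [rec_Ss _]] := (has_symbol_availability1P 1).2 peers_gt0 i j.
  by exists (Ss ord0).
have [S_le1 | S_gt1] := leqP #|S| 1; last exact: ltnW (leq_trans S_gt1 S_le).
have [k _ Sk] := symbol_recovery_set_le1 rec_S S_le1.
by move: S_le; rewrite Sk cards1.
Qed.

Lemma symbol_availability_code s : (0 < b)%N -> (0 < s)%N ->
  (forall i j, #|symbol_peers i j| = s) -> symbol_availability G s.
Proof.
move=> b_gt0 s_gt0 peers_s; exists 1%N.
  by apply: symbol_locality1 => // i j; rewrite peers_s.
split=> [|t /has_symbol_availability1P/(_ (Ordinal b_gt0) j0)].
  by apply/has_symbol_availability1P => i j; rewrite peers_s.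
by rewrite peers_s.
Qed.

End SubspaceCode.

Lemma expn_cofactor (q p N K : nat) :
  (0 < q)%N -> (p <= N)%N -> (q ^ p * K = q ^ N)%N -> K = (q ^ (N - p))%N.
Proof.
move=> q_gt0 pN eqN; apply/eqP.
rewrite -(@eqn_pmul2l (q ^ p)) ?expn_gt0 ?q_gt0 //.
by rewrite eqN -expnD subnKC.
Qed.

Section KernelCounts.
Variables (F : finFieldType) (b m t : nat) (DD AA : {set 'M[F]_(b, m)}).
Hypotheses (t_gt0 : (0 < t)%N) (b_le_m : (b <= m)%N).
Hypotheses (linD : is_lin_subspace DD) (cardD : #|DD| = (#|F| ^ (m * t))%N).
Hypotheses (sAD : AA \subset DD) (linA : is_lin_subspace AA).
Hypotheses (cardA : #|AA| = (#|F| ^ m)%N).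
Hypothesis rankA : forall X, X \in AA -> X != 0 -> \rank X = b.

Lemma card_ker_onto_rV p (phi : 'M[F]_(b, m) -> 'rV[F]_p) :
    {morph phi : x y / x + y} -> phi @: AA = [set: 'rV_p] -> (p <= m * t)%N ->
  #|[set E in DD | phi E == 0]| = (#|F| ^ (m * t - p))%N.
Proof.
move=> phiD onto p_le; apply: expn_cofactor p_le _.
  exact: ltnW (card_finNzRing_gt1 F).
rewrite -cardD -(card_lin_subspace_ker linD phiD) ?card_mx ?mul1n //.
move=> y _; have: y \in phi @: AA by rewrite onto in_setT.
exact: subsetP (imsetS _ sAD) y.
Qed.

Lemma card_row_ker i :
  #|[set E in DD | row i E == 0]| = (#|F| ^ (m * (t - 1)))%N.
Proof.
rewrite mulnBr muln1 card_ker_onto_rV => [//|x y||].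
- exact: linearD.
- rewrite -(imset_mulmx_full_rank linA cardA rankA (delta_mx_neq0 _ 0 i)).
  by apply: eq_imset => D; rewrite rowE.
- by rewrite leq_pmulr.
Qed.

Lemma card_mulmx_tr_ker (z : 'rV[F]_m) : z != 0 ->
  #|[set E in DD | z *m E^T == 0]| = (#|F| ^ (m * t - b))%N.
Proof.
move=> z_neq0; rewrite card_ker_onto_rV => [//|x y||].
- by rewrite linearD mulmxDr.
- exact: imset_mulmx_tr_full_rank.
- by rewrite (leq_trans b_le_m) ?leq_pmulr.
Qed.

End KernelCounts.

Theorem mainTheorem14 (F : finFieldType) (b m t : nat)
    (DD AA : {set 'M[F]_(b, m)}) :
  (2 <= t)%N -> (t <= b)%N -> (b <= m)%N ->
  is_lin_subspace DD -> #|DD| = (#|F| ^ (m * t))%N ->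
  AA \subset DD -> is_lin_subspace AA -> #|AA| = (#|F| ^ m)%N ->
  (forall X, X \in AA -> X != 0%R -> \rank X = b) ->
  let q := #|F| in
  code_dim (code_cols DD) = (b + m)%N /\
  min_distance (code_cols DD) (q ^ (m * (t - 1)) * (q ^ m - q ^ (m - b)))%N /\
  symbol_locality (code_cols DD) 1 /\
  (forall r, has_node_locality (code_cols DD) r -> (2 <= r)%N) /\
  symbol_availability (code_cols DD) (q ^ (m * (t - 1)) - 1)%N.
Proof.
move=> t_ge2 t_le_b b_le_m linD cardD sAD linA cardA rankA q.
have t_gt0 : (0 < t)%N by apply: leq_trans t_ge2.
have b_gt0 : (0 < b)%N by apply: leq_trans t_le_b.
have m_gt0 : (0 < m)%N by apply: leq_trans b_le_m.
have q_gt1 : (1 < q)%N := card_finNzRing_gt1 F.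
have ker_row := card_row_ker t_gt0 linD cardD sAD linA cardA rankA.
have ker_mul := card_mulmx_tr_ker t_gt0 b_le_m linD cardD sAD linA cardA rankA.
have peers_gt1 : (1 < q ^ (m * (t - 1)))%N.
  by rewrite -{1}(expn0 q) ltn_exp2l // muln_gt0 m_gt0 subn_gt0.
split; [|split; [|split; [|split]]].
- apply: code_dim_code => // z /(imset_mulmx_tr_full_rank linA cardA rankA).
  move/setP/(_ (delta_mx 0 (Ordinal b_gt0))); rewrite in_setT => /imsetP[D DA zD].
  exists D; first exact: subsetP sAD D DA.
  by rewrite -zD delta_mx_neq0.
- have -> : (q ^ (m * (t - 1)) * (q ^ m - q ^ (m - b)) = #|DD| - q ^ (m * t - b))%N.
    have m_le_mt : (m <= m * t)%N by rewrite leq_pmulr.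
    by rewrite cardD mulnBr -!expnD mulnBr muln1; congr (q ^ _ - q ^ _)%N; lia.
  apply: min_distance_code => //; rewrite cardD ltn_exp2l // ltn_subrL muln_gt0.
  by rewrite b_gt0 m_gt0 t_gt0.
- apply: symbol_locality1 => // i j.
  by rewrite (card_symbol_peers linD) ker_row subn_gt0.
- by move=> r; apply: (node_locality_ge2 linD).
- apply: symbol_availability_code => // [|i j]; first by rewrite subn_gt0.
  by rewrite (card_symbol_peers linD) ker_row.
Qed.
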